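(* A finite connected simple undirected graph $Y$ is bipartite if and only if $\kappa(Y)$ is odd.
   Context: A click at a vertex $x$ that is a source of an orientation reverses all edges incident to $x$, making $x$ a sink. Two acyclic orientations of $Y$ are $\kappa$-equivalent if one can be transformed into the other by a finite sequence of clicks; $\kappa(Y)$ is the number of $\kappa$-equivalence classes of acyclic orientations of $Y$. *)

From mathcomp Require Import all_boot.
Set Implicit Arguments. Unset Strict Implicit. Unset Printing Implicit Defensive.

Section Graph.
Variable T : finType.

Definition simple_graph (e : rel T) : Prop := symmetric e /\ irreflexive e.

Definition connected_graph (e : rel T) : Prop := forall x y : T, connect e x y.

Definition bipartite (e : rel T) : Prop :=
  exists c : T -> bool, forall x y, e x y -> c x != c y.

Definition is_orientation (e : rel T) (o : {set T * T}) : bool :=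
  [forall x, forall y, ((x, y) \in o) ==> e x y] &&
  [forall x, forall y, e x y ==> (((x, y) \in o) (+) ((y, x) \in o))].

Definition arc (o : {set T * T}) : rel T := fun x y => (x, y) \in o.

Definition acyclic (o : {set T * T}) : bool :=
  [forall x, forall y, arc o x y ==> ~~ connect (arc o) y x].

Definition acyc_orient (e : rel T) : {set {set T * T}} :=
  [set o | is_orientation e o && acyclic o].

Definition source (o : {set T * T}) (x : T) : bool :=
  [forall y, (y, x) \notin o].

Definition click (o : {set T * T}) (x : T) : {set T * T} :=
  [set p | if (p.1 == x) || (p.2 == x) then (p.2, p.1) \in o else p \in o].

Definition click_step : rel {set T * T} :=
  fun o o' => [exists x, source o x && (o' == click o x)].

Definition kequiv : rel {set T * T} :=
  connect (fun o o' => click_step o o' || click_step o' o).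

Definition kappa (e : rel T) : nat :=
  #|[set [set o' in acyc_orient e | kequiv o o'] | o in acyc_orient e]|.

End Graph.

From Pilot Require Import Defs.
From mathcomp Require Import all_boot order ssralg ssrint zify.
Set Implicit Arguments. Unset Strict Implicit. Unset Printing Implicit Defensive.
Import GRing.Theory.

(* Converting an orientation (reversing every arc) commutes with clicks, so it
   acts as an involution on kappa-classes and kappa(Y) has the parity of the
   number of classes fixed by it.  If o is kappa-equivalent to its converse,
   then the circulation of o along any closed walk is preserved by clicks and
   negated by conversion, hence zero; so o is induced by a height function that
   changes by 1 along every edge, and the parity of the height 2-colours Y.
   Conversely, given a 2-colouring c, shift such a height function to have the
   parity of c; undoing clicks at maxima lowers it by 2 at a time until it
   equals c.  So every self-converse orientation is equivalent to the one
   pointing from colour 0 to colour 1, which is self-converse.  So there is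
   exactly one fixed class when Y is bipartite, and none otherwise. *)

Lemma odd_card_involution (U : finType) (f : U -> U) (A : {set U}) :
  {in A, forall x, f x \in A} -> {in A, involutive f} ->
  odd #|A| = odd #|[set x in A | f x == x]|.
Proof.
have [n] := ubnP #|A|; elim: n A => // n IHn A ltAn fA fK.
have [/exists_inP[x xA fx_x]|/exists_inPn allfix] := boolP [exists x in A, f x != x];
  last first.
  suff -> : [set x in A | f x == x] = A by [].
  apply/setP=> x; rewrite inE.
  by case xA: (x \in A); rewrite //= -[f x == x]negbK allfix.
pose A' := A :\ x :\ f x.
have cardA : #|A| = #|A'|.+2.
  by rewrite (cardsD1 x) xA (cardsD1 (f x) (A :\ x)) !inE fx_x fA.
have fA' : {in A', forall y, f y \in A'}.
  move=> y; rewrite !inE => /and3P[y_fx y_x yA]; rewrite fA // andbT.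
  apply/andP; split; first by apply: contra_neq y_x => /(congr1 f); rewrite !fK.
  by apply: contra_neq y_fx => <-; rewrite fK.
have fixA : [set y in A | f y == y] = [set y in A' | f y == y].
  apply/setP=> y; rewrite !inE.
  case: (eqVneq y x) => [->|_]; first by rewrite (negbTE fx_x) !andbF.
  by case: (eqVneq y (f x)) => [->|] //=; rewrite fK // eq_sym (negbTE fx_x) !andbF.
rewrite cardA /= negbK fixA; apply: IHn => //; last by move=> y /setD1P[_ /setD1P[_]]; apply: fK.
by move: ltAn; rewrite cardA; lia.
Qed.

Lemma nat_potential (U : finType) (r : rel U) (h : U -> int) :
  (forall x y, r x y -> h y = (h x + 1)%R) ->
  exists h' : U -> nat, forall x y, r x y -> h' y = (h' x).+1.
Proof.
move=> h_pot; case: (pickP (fun _ : U => true)) => [x0 _|U0]; last first.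
  by exists (fun=> 0) => x; have := U0 x.
have [z _ z_min] := @Order.TotalTheory.arg_minP _ _ U x0 xpredT h isT.
exists (fun x => `|h x - h z|%N) => x y /h_pot hy.
by have := z_min x isT; lia.
Qed.

Section KappaParity.
Variables (T : finType) (e : rel T).
Hypotheses (e_sym : symmetric e) (e_irr : irreflexive e) (e_conn : connected_graph e).
Implicit Types (o : {set T * T}) (x y z a b : T).

Definition proper (c : T -> bool) := forall x y, e x y -> c x != c y.

Lemma orientation_edge o x y : is_orientation e o -> (x, y) \in o -> e x y.
Proof. by case/andP=> /forallP /(_ x) /forallP /(_ y) /implyP. Qed.

Lemma orientation_xor o x y :
  is_orientation e o -> e x y -> ((x, y) \in o) (+) ((y, x) \in o).
Proof. by case/andP=> _ /forallP /(_ x) /forallP /(_ y) /implyP. Qed.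

Lemma orientationP o :
  (forall x y, (x, y) \in o -> e x y) ->
  (forall x y, e x y -> ((x, y) \in o) (+) ((y, x) \in o)) ->
  is_orientation e o.
Proof.
by move=> edge xor; apply/andP; split; apply/forallP=> x; apply/forallP=> y;
  apply/implyP; [apply: edge | apply: xor].
Qed.

Lemma acyc_orient_orientation o : o \in acyc_orient e -> is_orientation e o.
Proof. by rewrite inE => /andP[]. Qed.

Lemma in_click o x a b :
  ((a, b) \in click o x) =
  (if (a == x) || (b == x) then (b, a) \in o else (a, b) \in o).
Proof. by rewrite inE. Qed.

Lemma clickK x : involutive (fun o => click o x).
Proof.
move=> o; apply/setP=> -[a b]; rewrite !in_click.
by case: ifP => ab_x; rewrite /= ?(orbC (b == x)) ab_x.
Qed.

Lemma click_orientation o x : is_orientation e o -> is_orientation e (click o x).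
Proof.
move=> o_or; apply: orientationP => a b.
  by rewrite in_click; case: ifP => _ /(orientation_edge o_or); rewrite 1?e_sym.
move=> /(orientation_xor o_or); rewrite !in_click orbC.
by case: ifP; rewrite // addbC.
Qed.

Lemma click_orientationE o x : is_orientation e (click o x) = is_orientation e o.
Proof.
apply/idP/idP; last exact: click_orientation.
by rewrite -{2}(clickK x o); apply: click_orientation.
Qed.

Definition converse o : {set T * T} := [set p | (p.2, p.1) \in o].

Lemma in_converse o a b : ((a, b) \in converse o) = ((b, a) \in o).
Proof. by rewrite inE. Qed.

Lemma converseK : involutive converse.
Proof. by move=> o; apply/setP=> -[a b]; rewrite !in_converse. Qed.

Lemma converse_orientation o : is_orientation e o -> is_orientation e (converse o).
Proof.
move=> o_or; apply: orientationP => a b; rewrite !in_converse.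
  by rewrite e_sym; apply: orientation_edge.
by rewrite addbC; apply: orientation_xor.
Qed.

Lemma connect_converse o x y :
  connect (Defs.arc (converse o)) x y = connect (Defs.arc o) y x.
Proof.
by rewrite -[RHS](connect_rev (Defs.arc o)); apply: eq_connect => a b; apply: in_converse.
Qed.

Lemma converse_acyclic o : acyclic o -> acyclic (converse o).
Proof.
move=> /forallP acyc; apply/forallP=> x; apply/forallP=> y.
by rewrite connect_converse {1}/Defs.arc in_converse; apply: (forallP (acyc y)).
Qed.

Lemma converse_acyc_orientE o :
  (converse o \in acyc_orient e) = (o \in acyc_orient e).
Proof.
suff conv o' : o' \in acyc_orient e -> converse o' \in acyc_orient e.
  by apply/idP/idP => /conv //; rewrite converseK.
rewrite !inE => /andP[o_or o_acyc].
by rewrite converse_orientation // converse_acyclic.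
Qed.

Lemma kequiv_sym : symmetric (@kequiv T).
Proof. by apply: sym_connect_sym => o o'; apply: orbC. Qed.

Lemma kequiv_invariant (P : pred {set T * T}) :
  (forall o x, source o x -> P (click o x) = P o) ->
  forall o o', kequiv o o' -> P o = P o'.
Proof.
move=> P_click; apply: closed_connect => o o'.
by case/orP=> /existsP[x /andP[x_src /eqP->]]; rewrite !unfold_in P_click.
Qed.

Lemma click_step_converse o o' :
  click_step o o' -> click_step (converse o') (converse o).
Proof.
case/existsP=> x /andP[/forallP x_src /eqP->]; apply/existsP; exists x.
apply/andP; split.
  by apply/forallP=> y; rewrite in_converse in_click eqxx /= x_src.
apply/eqP/setP=> -[a b]; rewrite in_click !in_converse !in_click.
by case ab_x: ((a == x) || (b == x)); rewrite // orbC ab_x.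
Qed.

Lemma kequiv_converse o o' : kequiv o o' -> kequiv (converse o) (converse o').
Proof.
case/connectP=> p step_p ->; apply/connectP; exists (map converse p).
  by rewrite path_map; apply: sub_path step_p => a b;
    case/orP=> /click_step_converse step; rewrite /= step ?orbT.
by rewrite last_map.
Qed.

Lemma kequiv_converseE o o' : kequiv (converse o) o' = kequiv o (converse o').
Proof. by apply/idP/idP => /kequiv_converse; rewrite converseK. Qed.

Section Circulation.
Local Open Scope ring_scope.

Definition arc_sign o a b : int := if (a, b) \in o then 1 else -1.

Fixpoint circulation o x (s : seq T) : int :=
  if s is y :: s' then arc_sign o x y + circulation o y s' else 0.

Lemma circulation_cat o x s1 s2 :
  circulation o x (s1 ++ s2) = circulation o x s1 + circulation o (last x s1) s2.
Proof. by elim: s1 x => [|y s IHs] x /=; rewrite ?add0r // IHs addrA. Qed.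

Lemma circulation_converse o x s :
  is_orientation e o -> path e x s -> circulation (converse o) x s = - circulation o x s.
Proof.
move=> o_or; elim: s x => [|y s IHs] x /=; first by rewrite oppr0.
case/andP=> /(orientation_xor o_or) xor /IHs->; rewrite /arc_sign in_converse.
by move: xor; case: ((x, y) \in o); case: ((y, x) \in o) => //= _; lia.
Qed.

Lemma arc_sign_click o x a b :
  is_orientation e o -> source o x -> e a b ->
  arc_sign (click o x) a b = arc_sign o a b + 2 * (b == x)%:Z - 2 * (a == x)%:Z.
Proof.
move=> o_or /forallP x_src ab; rewrite /arc_sign in_click.
have := orientation_xor o_or ab.
case: (eqVneq a x) => [ax|_]; case: (eqVneq b x) => [bx|_] /=; try lia.
- by move: ab; rewrite ax bx e_irr.
- by rewrite ax (negbTE (x_src b)) addbF => ->.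
- by rewrite bx (negbTE (x_src a)) addFb => ->.
Qed.

Lemma circulation_click o x x0 s :
  is_orientation e o -> source o x -> path e x0 s ->
  circulation (click o x) x0 s =
  circulation o x0 s + 2 * (last x0 s == x)%:Z - 2 * (x0 == x)%:Z.
Proof.
move=> o_or x_src; elim: s x0 => [|y s IHs] x0 /=; first lia.
by case/andP=> /(arc_sign_click o_or x_src)-> /IHs->; lia.
Qed.

Lemma kequiv_circulation o o' x0 s :
  path e x0 s -> last x0 s = x0 -> is_orientation e o -> kequiv o o' ->
  circulation o' x0 s = circulation o x0 s.
Proof.
move=> s_path s_closed o_or oo'.
pose P := [pred o2 | is_orientation e o2 && (circulation o2 x0 s == circulation o x0 s)].
suff : P o = P o' by rewrite /= o_or eqxx => /esym /andP[_ /eqP].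
apply: kequiv_invariant oo' => o2 x x_src /=; rewrite click_orientationE.
by case o2_or: (is_orientation e o2); rewrite //= circulation_click // s_closed addrK.
Qed.

Lemma self_converse_circulation o x0 s :
  path e x0 s -> last x0 s = x0 -> is_orientation e o -> kequiv o (converse o) ->
  circulation o x0 s = 0.
Proof.
move=> s_path s_closed o_or o_self.
have := kequiv_circulation s_path s_closed o_or o_self.
by rewrite circulation_converse //; lia.
Qed.

(* Vanishing circulation on closed walks makes [o] the gradient of a height
   function, obtained by integrating along walks from a fixed root. *)
Lemma circulation_potential o :
  is_orientation e o ->
  (forall x0 s, path e x0 s -> last x0 s = x0 -> circulation o x0 s = 0) ->
  exists h : T -> int, forall x y, (x, y) \in o -> h y = h x + 1.
Proof.
move=> o_or circ0; case: (pickP (fun _ : T => true)) => [r _|T0]; last first.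
  by exists (fun=> 0) => x; have := T0 x.
have walk_ex x y : exists s, path e x s && (last x s == y).
  by have /connectP[s s_path ->] := e_conn x y; exists s; rewrite s_path eqxx.
pose w x y := xchoose (walk_ex x y).
have w_path x y : path e x (w x y) by case/andP: (xchooseP (walk_ex x y)).
have w_last x y : last x (w x y) = y by case/andP: (xchooseP (walk_ex x y)) => _ /eqP.
have loop0 z s1 s2 : path e r s1 -> last r s1 = z -> path e z s2 -> last z s2 = r ->
    circulation o r s1 + circulation o z s2 = 0.
  move=> s1_path s1_last s2_path s2_last; rewrite -s1_last -circulation_cat.
  by apply: circ0; rewrite ?cat_path ?last_cat s1_last ?s1_path.
exists (fun x => circulation o r (w r x)) => x y xy.
have := loop0 x _ (y :: w y r) (w_path r x) (w_last r x).
rewrite /= /arc_sign xy w_path w_last (orientation_edge o_or xy) => /(_ isT erefl).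
by have := loop0 y _ _ (w_path r y) (w_last r y) (w_path y r) (w_last y r); lia.
Qed.

End Circulation.

Definition orient (h : T -> nat) : {set T * T} := [set p | e p.1 p.2 && (h p.1 < h p.2)].

Definition graded (h : T -> nat) :=
  forall x y, e x y -> h y = (h x).+1 \/ h x = (h y).+1.

Lemma in_orient h a b : ((a, b) \in orient h) = e a b && (h a < h b).
Proof. by rewrite inE. Qed.

Lemma eq_orient h1 h2 :
  (forall a b, e a b -> (h1 a < h1 b) = (h2 a < h2 b)) -> orient h1 = orient h2.
Proof.
move=> eq_lt; apply/setP=> -[a b]; rewrite !in_orient.
by case ab: (e a b); rewrite //= eq_lt.
Qed.

Lemma orient_potential o h :
  is_orientation e o -> (forall x y, (x, y) \in o -> h y = (h x).+1) -> o = orient h.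
Proof.
move=> o_or h_pot; apply/setP=> -[a b]; rewrite in_orient.
case ab: (e a b); last by apply: contraFF ab; apply: orientation_edge.
have := orientation_xor o_or ab.
by case: ((a, b) \in o) / idP => [/h_pot|_ /h_pot]; lia.
Qed.

Lemma potential_graded o h :
  is_orientation e o -> (forall x y, (x, y) \in o -> h y = (h x).+1) -> graded h.
Proof.
move=> o_or h_pot x y /(orientation_xor o_or).
by case: ((x, y) \in o) / idP => [/h_pot|_ /h_pot]; [left|right].
Qed.

Lemma graded_proper_odd h : graded h -> proper (odd \o h).
Proof. by move=> h_gr x y /h_gr[] hxy; rewrite /= hxy /=; case: odd. Qed.

Lemma connect_orient_leq h a b : connect (Defs.arc (orient h)) a b -> h a <= h b.
Proof.
case/connectP=> p; elim: p a => [|c p IHp] a /=; first by move=> _ ->.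
rewrite {1}/Defs.arc in_orient => /andP[/andP[_ /ltnW hac] /IHp hcb] /hcb.
exact: leq_trans.
Qed.

Lemma orient_acyc h : (forall x y, e x y -> h x != h y) -> orient h \in acyc_orient e.
Proof.
move=> h_inj; rewrite inE; apply/andP; split.
  apply: orientationP => a b; first by rewrite in_orient => /andP[].
  move=> ab; rewrite !in_orient (e_sym b a) ab /=.
  by have := h_inj a b ab; lia.
apply/forallP=> x; apply/forallP=> y; apply/implyP.
rewrite /Defs.arc in_orient => /andP[_ hxy]; apply/negP => /connect_orient_leq.
by rewrite leqNgt hxy.
Qed.

Lemma converse_orient h h' :
  (forall a b, e a b -> (h' a < h' b) = (h b < h a)) -> converse (orient h) = orient h'.
Proof.
move=> conv_lt; apply/setP=> -[a b]; rewrite in_converse !in_orient e_sym.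
by case ab: (e a b); rewrite //= conv_lt.
Qed.

Lemma click_step_raise h x :
  (forall y, e x y -> h y = (h x).+1) ->
  click_step (orient h) (orient [eta h with x |-> (h x).+2]).
Proof.
move=> x_min; apply/existsP; exists x; apply/andP; split.
  apply/forallP=> y; rewrite in_orient e_sym.
  by case xy: (e x y); rewrite //= (x_min y xy) ltnNge leqnSn.
apply/eqP/setP=> -[a b]; rewrite in_click !in_orient /=.
case: (eqVneq a x) => [->|_]; case: (eqVneq b x) => [->|_] //=.
- by rewrite [e b x]e_sym; case xb: (e x b); rewrite //= (x_min b xb); lia.
- by rewrite [e a x]e_sym; case ax: (e x a); rewrite //= (x_min a ax); lia.
Qed.

Section LowerMaximum.
Variables (h : T -> nat) (z : T).
Hypotheses (h_gr : graded h) (z_max : forall x, h x <= h z) (hz2 : 2 <= h z).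

Let h' := [eta h with z |-> (h z).-2].

Lemma graded_max_neighbour y : e z y -> h z = (h y).+1.
Proof. by move=> /h_gr[]; have := z_max y; lia. Qed.

Lemma graded_lower : graded h'.
Proof.
have no_loop : ~~ e z z by apply/negP => /h_gr[]; lia.
move=> a b ab; rewrite /h' /=.
case: (eqVneq a z) => [az|_]; case: (eqVneq b z) => [bz|_]; last exact: h_gr.
- by move: ab; rewrite az bz (negbTE no_loop).
- by move: ab hz2; rewrite az => /graded_max_neighbour; lia.
- by move: ab hz2; rewrite bz e_sym => /graded_max_neighbour; lia.
Qed.

Lemma kequiv_lower_max : kequiv (orient h) (orient h').
Proof.
rewrite kequiv_sym; apply/connect1/orP; left.
have -> : orient h = orient [eta h' with z |-> (h' z).+2].
  by apply: eq_orient => a b _ /=; rewrite eqxx; case: eqP => [->|]; case: eqP => [->|]; lia.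
apply: click_step_raise => y zy; rewrite /h' /= eqxx.
case: eqP => [yz|_]; first by move: zy; rewrite yz => /graded_max_neighbour; lia.
by have := graded_max_neighbour zy; lia.
Qed.

End LowerMaximum.

(* Lowering maxima by two levels preserves parities and ends at heights 0/1. *)
Lemma kequiv_orient_odd h : graded h -> kequiv (orient h) (orient (fun x => odd (h x))).
Proof.
have [n] := ubnP (\sum_x h x); elim: n h => // n IHn h sum_h h_gr.
have [/existsP[x0 hx0]|/existsPn low] := boolP [exists x, 1 < h x]; last first.
  rewrite (@eq_orient h (fun x => odd (h x))) => [|a b _]; first exact: connect0.
  by have := low a; have := low b; lia.
have [z _ z_max] := @arg_maxnP _ x0 xpredT h isT.
have z_max' : forall x, h x <= h z by move=> x; apply: z_max.
have hz2 : 2 <= h z by have := z_max x0 isT; lia.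
apply: connect_trans (kequiv_lower_max h_gr z_max' hz2) _.
rewrite (@eq_orient (fun x => odd (h x)) (fun x => odd ([eta h with z |-> (h z).-2] x)));
  last by move=> a b _ /=; case: eqP => [->|]; case: eqP => [->|]; rewrite ?odd_sub //=; lia.
apply: IHn; last exact: graded_lower.
have sum_lt : \sum_x [eta h with z |-> (h z).-2] x < \sum_x h x.
  rewrite [X in _ < X](bigD1 z) // [X in X < _](bigD1 z) //= eqxx (eq_bigr h) => [|x /negbTE->] //.
  lia.
by move: sum_h sum_lt; lia.
Qed.

Lemma kequiv_colour_converse c :
  proper c -> kequiv (orient (fun x => c x)) (converse (orient (fun x => c x))).
Proof.
move=> c_proper; pose h x := (~~ c x).+1.
have h_gr : graded h.
  by move=> a b /c_proper; rewrite /h; case: (c a); case: (c b) => //= _; [left|right].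
rewrite kequiv_sym (@converse_orient _ h) => [|a b /c_proper].
  rewrite (@eq_orient (fun x => c x) (fun x => odd (h x))) => [|a b _].
    exact: kequiv_orient_odd.
  by rewrite /h /=; case: (c a); case: (c b).
by rewrite /h; case: (c a); case: (c b).
Qed.

Lemma proper_colourings_eq c1 c2 r : proper c1 -> proper c2 -> c1 r = c2 r -> c1 =1 c2.
Proof.
move=> c1_proper c2_proper r_eq x; apply/eqP.
have closed_eq : closed e [pred y | c1 y == c2 y].
  move=> a b ab; move: (c1_proper a b ab) (c2_proper a b ab); rewrite !inE.
  by case: (c1 a); case: (c1 b); case: (c2 a); case: (c2 b).
by have := closed_connect closed_eq (e_conn r x); rewrite !inE r_eq eqxx => <-.
Qed.

Lemma self_converse_heights o :
  is_orientation e o -> kequiv o (converse o) ->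
  exists h : T -> nat, o = orient h /\ graded h.
Proof.
move=> o_or o_self.
have [hz hz_pot] := circulation_potential o_or
  (fun x0 s s_path s_closed => self_converse_circulation s_path s_closed o_or o_self).
have [h h_pot] := nat_potential hz_pot.
by exists h; split; [apply: orient_potential | apply: potential_graded h_pot].
Qed.

Lemma self_converse_bipartite o :
  is_orientation e o -> kequiv o (converse o) -> bipartite e.
Proof.
move=> o_or o_self; have [h [_ h_gr]] := self_converse_heights o_or o_self.
by exists (odd \o h); apply: graded_proper_odd.
Qed.

Lemma self_converse_kequiv_colour o c :
  proper c -> is_orientation e o -> kequiv o (converse o) ->
  kequiv o (orient (fun x => c x)).
Proof.
move=> c_proper o_or o_self; have [h [-> h_gr]] := self_converse_heights o_or o_self.
case: (pickP (fun _ : T => true)) => [r _|T0]; last first.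
  by rewrite (@eq_orient h (fun x => c x)) => [|a]; [apply: connect0 | have := T0 a].
pose h' x := h x + (odd (h r) != c r).
have h'_gr : graded h' by move=> a b /h_gr; rewrite /h'; lia.
have odd_h' : odd \o h' =1 c.
  apply: (proper_colourings_eq (r := r)) (graded_proper_odd h'_gr) c_proper _.
  by rewrite /= /h' oddD oddb; case: (odd (h r)); case: (c r).
rewrite (@eq_orient h h') => [|a b _]; last by rewrite /h' ltn_add2r.
rewrite -(@eq_orient (fun x => odd (h' x)) (fun x => c x)) => [|a b _]; last by rewrite -!odd_h'.
exact: kequiv_orient_odd.
Qed.

Definition kclass o := [set o' in acyc_orient e | kequiv o o'].

Lemma in_kclass o o' : (o' \in kclass o) = (o' \in acyc_orient e) && kequiv o o'.
Proof. by rewrite in_set. Qed.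

Lemma kappaE : kappa e = #|[set kclass o | o in acyc_orient e]|.
Proof. by []. Qed.

Lemma kclass_eq o o' : kequiv o o' -> kclass o = kclass o'.
Proof.
move=> oo'; apply/setP=> o2; rewrite !in_kclass; congr (_ && _).
apply/idP/idP => [oo2|o'o2]; last exact: connect_trans oo' o'o2.
have o'o : kequiv o' o by rewrite kequiv_sym.
exact: connect_trans o'o oo2.
Qed.

Lemma converse_kclass o : converse @: kclass o = kclass (converse o).
Proof.
apply/setP=> o2; rewrite (can2_imset_pre _ converseK converseK) inE !in_kclass.
by rewrite converse_acyc_orientE kequiv_converseE.
Qed.

Lemma kclass_converse_fixed o :
  o \in acyc_orient e -> (kclass (converse o) == kclass o) = kequiv o (converse o).
Proof.
move=> oA; apply/eqP/idP => [kc_eq|o_self]; last by rewrite (kclass_eq o_self).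
have : o \in kclass (converse o) by rewrite kc_eq in_kclass oA; apply: connect0.
by rewrite in_kclass kequiv_sym => /andP[].
Qed.

Lemma odd_kappa :
  odd (kappa e) = odd #|[set kclass o | o in acyc_orient e & kequiv o (converse o)]|.
Proof.
rewrite kappaE (@odd_card_involution _ (fun C : {set {set T * T}} => converse @: C)).
- apply/congr1/eq_card => C; rewrite inE.
  apply/andP/imsetP => [[/imsetP[o oA ->]]|[o]].
    rewrite converse_kclass kclass_converse_fixed // => o_self.
    by exists o; rewrite // in_set oA o_self.
  rewrite in_set => /andP[oA o_self] ->; split; first exact: imset_f.
  by rewrite converse_kclass kclass_converse_fixed.
- move=> _ /imsetP[o oA ->]; rewrite converse_kclass; apply: imset_f.
  by rewrite converse_acyc_orientE.
- by move=> _ /imsetP[o _ ->]; rewrite !converse_kclass converseK.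
Qed.

End KappaParity.

Theorem corollary1 (T : finType) (e : rel T) :
  simple_graph e -> connected_graph e ->
  (bipartite e <-> odd (kappa e)).
Proof.
move=> [e_sym e_irr] e_conn; rewrite odd_kappa //; split => [[c c_proper]|].
  pose oc := orient e (fun x => c x).
  suff -> : [set kclass e o | o in acyc_orient e & kequiv o (converse o)] = [set kclass e oc].
    by rewrite cards1.
  apply/setP=> C; rewrite in_set1; apply/imsetP/eqP => [[o]|->].
    rewrite in_set => /andP[oA o_self] ->.
    by apply: kclass_eq; apply: self_converse_kequiv_colour (acyc_orient_orientation oA) _.
  exists oc => //; rewrite in_set kequiv_colour_converse // andbT.
  by apply: orient_acyc => // x y /c_proper; case: (c x); case: (c y).
case/odd_gt0/card_gt0P=> _ /imsetP[o + _]; rewrite in_set => /andP[oA o_self].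
exact: self_converse_bipartite (acyc_orient_orientation oA) o_self.
Qed.
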